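(* Let $H$ be a residually free group. Then the restriction to $Z(H)$ of the abelianization map $H\to H_{ab}$ is injective. In particular, if $H$ is finitely generated then $Z(H)$ is finitely generated.
   Context: A group $H$ is residually free if for every non-trivial $h\in H$ there is a homomorphism from $H$ to a free group not killing $h$. $Z(H)$ is the center of $H$ and $H_{ab}=H/[H,H]$. *)

From Stdlib Require Import List.
Import ListNotations.
Set Implicit Arguments.

Record group := Group {
  carrier :> Type;
  gmul : carrier -> carrier -> carrier;
  ginv : carrier -> carrier;
  gone : carrier;
  gmulA : forall x y z, gmul x (gmul y z) = gmul (gmul x y) z;
  gmul1g : forall x, gmul gone x = x;
  gmulg1 : forall x, gmul x gone = x;
  gmulVg : forall x, gmul (ginv x) x = gone;
  gmulgV : forall x, gmul x (ginv x) = gone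
}.
Arguments gmul {g}.
Arguments ginv {g}.
Arguments gone {g}.

Definition is_hom {G K : group} (f : G -> K) : Prop :=
  forall x y : G, f (gmul x y) = gmul (f x) (f y).

Definition free_on {F : group} {X : Type} (b : X -> F) : Prop :=
  forall (K : group) (f : X -> K),
    exists g : F -> K, is_hom g /\ (forall x, g (b x) = f x) /\
      (forall g' : F -> K, is_hom g' -> (forall x, g' (b x) = f x) ->
         forall y, g' y = g y).

Definition is_free_group (F : group) : Prop :=
  exists (X : Type) (b : X -> F), free_on b.

Definition residually_free (H : group) : Prop :=
  forall h : H, h <> gone ->
    exists (F : group) (phi : H -> F),
      is_free_group F /\ is_hom phi /\ phi h <> gone.

Inductive in_gen {G : group} (S : G -> Prop) : G -> Prop :=
  | gen_one : in_gen S gone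
  | gen_mul : forall s x, S s -> in_gen S x -> in_gen S (gmul s x)
  | gen_mulV : forall s x, S s -> in_gen S x -> in_gen S (gmul (ginv s) x).

Definition commg {G : group} (a b : G) : G :=
  gmul (gmul (ginv a) (ginv b)) (gmul a b).

Definition in_derived {G : group} (x : G) : Prop :=
  in_gen (fun c => exists a b : G, c = commg a b) x.

Definition central {G : group} (z : G) : Prop :=
  forall x : G, gmul z x = gmul x z.

(* abelianization map H -> H/[H,H]: x and y have the same image iff x^-1 y in [H,H] *)
Definition ab_eq {G : group} (x y : G) : Prop :=
  in_derived (gmul (ginv x) y).

Definition fin_gen (G : group) : Prop :=
  exists l : list G, forall x : G, in_gen (fun s => In s l) x.

Definition center_fin_gen (G : group) : Prop :=
  exists l : list G, (forall s, In s l -> central s) /\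
    forall z : G, central z -> in_gen (fun s => In s l) z.

(* Let z be central and in [H,H].  If z <> 1, residual freeness gives a
   homomorphism phi : H -> F into a free group with phi z <> 1.  Every
   element of phi(H) commutes with phi z, and in a free group commutation
   is transitive on non-trivial elements, so phi(H) is abelian; hence phi
   kills [H,H], and phi z = 1, a contradiction.  So Z(H) meets [H,H]
   trivially, i.e. Z(H) -> H_ab is injective.  When H is generated by a
   finite list l, H_ab is a quotient of Z^|l|; the preimage in Z^|l| of the
   image of Z(H) is a subgroup of Z^|l|, hence finitely generated, and
   lifting its generators to central elements gives generators of Z(H) by
   injectivity. *)

From Stdlib Require Import List Lia ZArith Classical ClassicalEpsilon
  FunctionalExtensionality ProofIrrelevance.
Import ListNotations.

Section GroupCalculus.
Context {G : group}.
Implicit Types x y z : G.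

Lemma mulKg x y : gmul (ginv x) (gmul x y) = y.
Proof. now rewrite gmulA, gmulVg, gmul1g. Qed.

Lemma mulVKg x y : gmul x (gmul (ginv x) y) = y.
Proof. now rewrite gmulA, gmulgV, gmul1g. Qed.

Lemma mulgI x y z : gmul x y = gmul x z -> y = z.
Proof. intro E. now rewrite <- (mulKg x y), <- (mulKg x z), E. Qed.

Lemma mulIg x y z : gmul y x = gmul z x -> y = z.
Proof.
  intro E. rewrite <- (gmulg1 _ y), <- (gmulg1 _ z), <- (gmulgV _ x), !gmulA, E.
  reflexivity.
Qed.

Lemma invg_uniq x y : gmul x y = gone -> ginv x = y.
Proof. intro E. apply (mulgI x). now rewrite gmulgV. Qed.

Lemma invgK x : ginv (ginv x) = x.
Proof. apply invg_uniq, gmulVg. Qed.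

Lemma invgM x y : ginv (gmul x y) = gmul (ginv y) (ginv x).
Proof.
  apply invg_uniq. rewrite <- gmulA, (gmulA _ y), gmulgV, gmul1g. apply gmulgV.
Qed.

Lemma invg1 : ginv (@gone G) = gone.
Proof. apply invg_uniq, gmul1g. Qed.
End GroupCalculus.

Ltac gnorm := repeat (rewrite ?invgM, ?invgK, ?invg1, ?gmul1g, ?gmulg1,
  <- ?gmulA, ?mulKg, ?mulVKg, ?gmulVg, ?gmulgV).

Lemma hom_one {G K : group} (f : G -> K) : is_hom f -> f gone = gone.
Proof. intro hf. apply (mulgI (f gone)). now rewrite <- hf, !gmulg1. Qed.

Lemma hom_inv {G K : group} (f : G -> K) :
  is_hom f -> forall x, f (ginv x) = ginv (f x).
Proof. intros hf x. symmetry. apply invg_uniq. rewrite <- hf, gmulgV. now apply hom_one. Qed.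

Definition commute {G : group} (x y : G) : Prop := gmul x y = gmul y x.

Definition conjg {G : group} (t x : G) : G := gmul (ginv t) (gmul x t).

Lemma conjg_mul {G : group} (t x y : G) : conjg t (gmul x y) = gmul (conjg t x) (conjg t y).
Proof. unfold conjg. gnorm. reflexivity. Qed.

Lemma conjg_commute {G : group} (t x y : G) : commute x y <-> commute (conjg t x) (conjg t y).
Proof.
  unfold commute. rewrite <- !conjg_mul. unfold conjg. split; intro E.
  - now rewrite E.
  - now apply mulgI, mulIg in E.
Qed.

Lemma commute_inv_l {G : group} (x y : G) : commute x y -> commute (ginv x) y.
Proof. unfold commute; intro E. apply (mulgI x). gnorm. rewrite gmulA, E. gnorm. reflexivity. Qed.

Lemma commg_of_commute {G : group} (x y : G) : commute x y -> commg x y = gone.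
Proof. unfold commute, commg. intro E. rewrite E. gnorm. reflexivity. Qed.

Section Centre.
Context {G : group}.

Lemma central_one : central (@gone G).
Proof. intro. now rewrite gmul1g, gmulg1. Qed.

Lemma central_mul (x y : G) : central x -> central y -> central (gmul x y).
Proof. intros Cx Cy u. rewrite <- gmulA, Cy, gmulA, Cx, gmulA. reflexivity. Qed.

Lemma central_inv (x : G) : central x -> central (ginv x).
Proof. intros Cx u. apply (mulgI x). rewrite mulVKg, gmulA, Cx. gnorm. reflexivity. Qed.
End Centre.

Section Generation.
Context {G : group}.
Implicit Types x y s : G.

Lemma in_gen_mul (S : G -> Prop) x y : in_gen S x -> in_gen S y -> in_gen S (gmul x y).
Proof.
  intros Hx Hy. induction Hx.
  - now rewrite gmul1g.
  - rewrite <- gmulA. now apply gen_mul.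
  - rewrite <- gmulA. now apply gen_mulV.
Qed.

Lemma in_gen_gen (S : G -> Prop) s : S s -> in_gen S s.
Proof. intro. rewrite <- (gmulg1 _ s). apply gen_mul; auto. apply gen_one. Qed.

Lemma in_gen_genV (S : G -> Prop) s : S s -> in_gen S (ginv s).
Proof. intro. rewrite <- (gmulg1 _ (ginv s)). apply gen_mulV; auto. apply gen_one. Qed.

Lemma in_gen_inv (S : G -> Prop) x : in_gen S x -> in_gen S (ginv x).
Proof.
  intro Hx. induction Hx.
  - rewrite invg1. apply gen_one.
  - rewrite invgM. apply in_gen_mul; auto. now apply in_gen_genV.
  - rewrite invgM, invgK. apply in_gen_mul; auto. now apply in_gen_gen.
Qed.

Lemma derived_commg x y : in_derived (commg x y).
Proof. apply in_gen_gen. eauto. Qed.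

Lemma derived_conj (u d : G) : in_derived d -> in_derived (conjg u d).
Proof.
  intro Hd. replace (conjg u d) with (gmul d (commg d u)).
  - apply in_gen_mul; [exact Hd | apply derived_commg].
  - unfold conjg, commg. gnorm. reflexivity.
Qed.

Lemma ab_eq_refl x : ab_eq x x.
Proof. unfold ab_eq. rewrite gmulVg. apply gen_one. Qed.

Lemma ab_eq_of_eq x y : x = y -> ab_eq x y.
Proof. intros ->. apply ab_eq_refl. Qed.

Lemma ab_eq_sym x y : ab_eq x y -> ab_eq y x.
Proof. unfold ab_eq. intro E. apply in_gen_inv in E. now rewrite invgM, invgK in E. Qed.

Lemma ab_eq_trans x y z : ab_eq x y -> ab_eq y z -> ab_eq x z.
Proof.
  unfold ab_eq. intros E1 E2.
  replace (gmul (ginv x) z) with (gmul (gmul (ginv x) y) (gmul (ginv y) z)).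
  - now apply in_gen_mul.
  - gnorm. reflexivity.
Qed.

Lemma ab_eq_mul x x' y y' : ab_eq x x' -> ab_eq y y' -> ab_eq (gmul x y) (gmul x' y').
Proof.
  unfold ab_eq. intros E1 E2.
  replace (gmul (ginv (gmul x y)) (gmul x' y'))
    with (gmul (conjg y (gmul (ginv x) x')) (gmul (ginv y) y')).
  - apply in_gen_mul; auto. now apply derived_conj.
  - unfold conjg. gnorm. reflexivity.
Qed.

Lemma ab_eq_comm x y : ab_eq (gmul x y) (gmul y x).
Proof.
  unfold ab_eq. replace (gmul (ginv (gmul x y)) (gmul y x)) with (commg y x).
  - apply derived_commg.
  - unfold commg. gnorm. reflexivity.
Qed.

Lemma ab_eq_inv x y : ab_eq x y -> ab_eq (ginv x) (ginv y).
Proof.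
  intro E. apply ab_eq_trans with (gmul (ginv x) (gmul y (ginv y))).
  - rewrite gmulgV, gmulg1. apply ab_eq_refl.
  - apply ab_eq_trans with (gmul (ginv x) (gmul x (ginv y))).
    + apply ab_eq_mul; [apply ab_eq_refl|]. apply ab_eq_mul; [now apply ab_eq_sym|apply ab_eq_refl].
    + rewrite mulKg. apply ab_eq_refl.
Qed.
End Generation.
(* A letter x^{+1} or x^{-1} is a pair (x, sign); a word is reduced if no
   letter is followed by its inverse.  Equality of letters is decided
   classically since the alphabet X is an arbitrary type. *)
Section Words.
Context {X : Type}.

Definition letter : Type := (X * bool)%type.
Definition linv (a : letter) : letter := (fst a, negb (snd a)).

Lemma linvK a : linv (linv a) = a.
Proof. destruct a as [x e]; unfold linv; simpl; now rewrite Bool.negb_involutive. Qed.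

Lemma linv_neq a : a <> linv a.
Proof. destruct a as [x e]; unfold linv; simpl; intro E; inversion E; destruct e; discriminate. Qed.

Definition reduced (l : list letter) : Prop := forall i a c,
  nth_error l i = Some a -> nth_error l (S i) = Some c -> c <> linv a.

Lemma reduced_nil : reduced [].
Proof. intros [|i] a c E; discriminate. Qed.

Lemma reduced_cons a l :
  reduced l -> (forall c, nth_error l 0 = Some c -> c <> linv a) -> reduced (a :: l).
Proof. intros R Ha [|i] a' c E1 E2; simpl in *; [inversion E1; subst|]; eauto. Qed.

Lemma reduced_tl a l : reduced (a :: l) -> reduced l.
Proof. intros R i a' c E1 E2. apply (R (S i)); auto. Qed.

Lemma reduced_hd a c l : reduced (a :: c :: l) -> c <> linv a.
Proof. intro R. apply (R 0); reflexivity. Qed.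

Lemma reduced_app u v : reduced u -> reduced v ->
  (forall a c, nth_error u (pred (length u)) = Some a -> nth_error v 0 = Some c -> c <> linv a) ->
  reduced (u ++ v).
Proof.
  intros Ru Rv J i a c E1 E2.
  destruct (Nat.lt_ge_cases (S i) (length u)).
  - rewrite nth_error_app1 in E1, E2 by lia. eauto.
  - destruct (Nat.eq_dec (S i) (length u)).
    + rewrite nth_error_app1 in E1 by lia. rewrite nth_error_app2 in E2 by lia.
      replace (S i - length u) with 0 in E2 by lia. apply (J a c); auto.
      now replace (pred (length u)) with i by lia.
    + rewrite nth_error_app2 in E1, E2 by lia.
      replace (S i - length u) with (S (i - length u)) in E2 by lia. eauto.
Qed.

Lemma reduced_app_l u v : reduced (u ++ v) -> reduced u.
Proof.
  intros R i a c E1 E2. apply (R i).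
  - rewrite nth_error_app1; auto. apply nth_error_Some. congruence.
  - rewrite nth_error_app1; auto. apply nth_error_Some. congruence.
Qed.

Definition push (a : letter) (l : list letter) : list letter :=
  match l with
  | c :: l' => if excluded_middle_informative (c = linv a) then l' else a :: l
  | [] => [a]
  end.

Definition pushl (u v : list letter) : list letter := fold_right push v u.

Definition invl (u : list letter) : list letter := rev (map linv u).

Lemma push_red a l : reduced l -> reduced (push a l).
Proof.
  intro R. destruct l as [|c l']; simpl.
  - apply reduced_cons; auto using reduced_nil. intros c E; discriminate.
  - destruct (excluded_middle_informative (c = linv a)).
    + eapply reduced_tl; eauto.
    + apply reduced_cons; auto. intros c' E; simpl in E; inversion E; subst; auto.
Qed.

Lemma push_reduced_cons a l : reduced (a :: l) -> push a l = a :: l.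
Proof.
  intro R. destruct l as [|c l']; simpl; auto.
  destruct (excluded_middle_informative (c = linv a)) as [E|E]; auto.
  exfalso; exact (reduced_hd _ _ _ R E).
Qed.

Lemma push_linv a l : reduced l -> push a (push (linv a) l) = l.
Proof.
  intro R. destruct l as [|c l']; simpl.
  - destruct (excluded_middle_informative (linv a = linv a)); tauto.
  - destruct (excluded_middle_informative (c = linv (linv a))) as [E|E].
    + rewrite linvK in E. subst c. destruct l' as [|d l'']; simpl; auto.
      destruct (excluded_middle_informative (d = linv a)) as [E'|E']; auto.
      subst. exfalso. apply (reduced_hd _ _ _ R). reflexivity.
    + simpl. destruct (excluded_middle_informative (linv a = linv a)); tauto.
Qed.

Lemma pushl_red u v : reduced v -> reduced (pushl u v).
Proof. intro R; induction u; simpl; auto using push_red. Qed.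

Lemma pushl_app u v w : pushl (u ++ v) w = pushl u (pushl v w).
Proof. apply fold_right_app. Qed.

Lemma pushl_push a l w : reduced w -> pushl (push a l) w = push a (pushl l w).
Proof.
  intro R. destruct l as [|c l']; simpl; auto.
  destruct (excluded_middle_informative (c = linv a)) as [E|E]; simpl; auto.
  subst c. rewrite push_linv; auto. now apply pushl_red.
Qed.

Lemma pushl_pushl u v w : reduced w -> pushl (pushl u v) w = pushl (u ++ v) w.
Proof.
  intro R. induction u as [|a u IH]; simpl; auto.
  now rewrite pushl_push, IH.
Qed.

Lemma pushl_nil u : reduced u -> pushl u [] = u.
Proof.
  induction u as [|a u IH]; intro R; simpl; auto.
  rewrite IH by (eapply reduced_tl; eauto). now apply push_reduced_cons.
Qed.

Lemma pushl_invl u : pushl (invl u) u = [].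
Proof.
  induction u as [|a u IH]; simpl; auto. unfold invl in *; simpl.
  rewrite pushl_app. simpl. rewrite linvK.
  destruct (excluded_middle_informative (a = a)); tauto.
Qed.

Lemma invl_invl u : invl (invl u) = u.
Proof.
  unfold invl. rewrite map_rev, rev_involutive, map_map.
  rewrite <- (map_id u) at 2. apply map_ext, linvK.
Qed.

Lemma invl_app u v : invl (u ++ v) = invl v ++ invl u.
Proof. unfold invl. now rewrite map_app, rev_app_distr. Qed.

Lemma length_invl u : length (invl u) = length u.
Proof. unfold invl. now rewrite length_rev, length_map. Qed.

Lemma invl_red u : reduced u -> reduced (invl u).
Proof.
  induction u as [|a u IH]; intro R; simpl; auto using reduced_nil.
  unfold invl in *. simpl. apply reduced_app.
  - apply IH. eapply reduced_tl; eauto.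
  - apply reduced_cons; auto using reduced_nil. intros c E; discriminate.
  - intros a' c E1 E2. simpl in E2. inversion E2; subst c. clear E2.
    destruct u as [|d u']; [simpl in E1; destruct (pred 0); discriminate|].
    simpl in E1. rewrite length_app, length_rev, length_map in E1. simpl in E1.
    replace (pred (length u' + 1)) with (length u' + 0) in E1 by lia.
    rewrite nth_error_app2 in E1 by (rewrite length_rev, length_map; lia).
    rewrite length_rev, length_map in E1. replace (length u' + 0 - length u') with 0 in E1 by lia.
    simpl in E1. inversion E1; subst a'. intro E. apply (reduced_hd _ _ _ R).
    apply (f_equal linv) in E. rewrite !linvK in E. now rewrite E, linvK.
Qed.

Lemma cancel_decomposition u v : reduced u -> reduced v ->
  exists u1 s v1, u = u1 ++ s /\ v = invl s ++ v1 /\ reduced (u1 ++ v1).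
Proof.
  revert v. induction u as [|x u IH] using rev_ind; intros v Ru Rv.
  - exists [], [], v. simpl. auto.
  - destruct v as [|c v'].
    + exists (u ++ [x]), [], []. rewrite app_nil_r. simpl. auto.
    + destruct (excluded_middle_informative (c = linv x)) as [E|E].
      * destruct (IH v' (reduced_app_l _ _ Ru) (reduced_tl _ _ Rv)) as (u1 & s & v1 & E1 & E2 & R).
        exists u1, (s ++ [x]), v1. subst. rewrite invl_app. simpl.
        rewrite app_assoc. auto.
      * exists (u ++ [x]), [], (c :: v'). simpl. rewrite app_nil_r. repeat split; auto.
        apply reduced_app; auto. intros a c' E1 E2.
        rewrite length_app in E1. simpl in E1.
        replace (pred (length u + 1)) with (length u + 0) in E1 by lia.
        rewrite nth_error_app2 in E1 by lia. replace (length u + 0 - length u) with 0 in E1 by lia.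
        simpl in *. congruence.
Qed.
End Words.

Section ReducedWordGroup.
Variable X : Type.

Definition rword : Type := {l : list (@letter X) | reduced l}.

Lemma rword_eq (u v : rword) : proj1_sig u = proj1_sig v -> u = v.
Proof. destruct u, v; simpl; intros; subst. f_equal. apply proof_irrelevance. Qed.

Definition rw_mul (u v : rword) : rword := exist _ _ (pushl_red (proj1_sig u) _ (proj2_sig v)).
Definition rw_one : rword := exist _ [] (@reduced_nil X).
Definition rw_inv (u : rword) : rword := exist _ _ (invl_red _ (proj2_sig u)).

Lemma rw_mulA u v w : rw_mul u (rw_mul v w) = rw_mul (rw_mul u v) w.
Proof. apply rword_eq; simpl. now rewrite pushl_pushl, pushl_app by apply (proj2_sig w). Qed.

Lemma rw_mul1 u : rw_mul rw_one u = u.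
Proof. now apply rword_eq. Qed.

Lemma rw_mulr1 u : rw_mul u rw_one = u.
Proof. apply rword_eq; simpl. apply pushl_nil, (proj2_sig u). Qed.

Lemma rw_mulV u : rw_mul (rw_inv u) u = rw_one.
Proof. apply rword_eq; simpl. apply pushl_invl. Qed.

Lemma rw_mulgV u : rw_mul u (rw_inv u) = rw_one.
Proof. apply rword_eq; simpl. rewrite <- (invl_invl (proj1_sig u)) at 1. apply pushl_invl. Qed.

Definition rword_group : group :=
  @Group rword rw_mul rw_inv rw_one rw_mulA rw_mul1 rw_mulr1 rw_mulV rw_mulgV.

Lemma singleton_reduced (x : X) : reduced [(x, true)].
Proof. apply reduced_cons; [apply reduced_nil|]. intros c E; discriminate. Qed.
End ReducedWordGroup.

Section NormalForm.
Variables (F : group) (X : Type) (b : X -> F).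
Hypothesis Hb : free_on b.

Definition letter_val (a : @letter X) : F := if snd a then b (fst a) else ginv (b (fst a)).
Definition word_val (l : list (@letter X)) : F :=
  fold_right (fun a acc => gmul (letter_val a) acc) gone l.

Lemma word_val_app u v : word_val (u ++ v) = gmul (word_val u) (word_val v).
Proof. induction u; simpl; [now rewrite gmul1g|now rewrite IHu, gmulA]. Qed.

Lemma letter_val_linv a : letter_val (linv a) = ginv (letter_val a).
Proof.
  symmetry. apply invg_uniq.
  destruct a as [x []]; unfold letter_val, linv; simpl; [apply gmulgV|apply gmulVg].
Qed.

Lemma word_val_push a l : word_val (push a l) = gmul (letter_val a) (word_val l).
Proof.
  destruct l as [|c l']; simpl; auto.
  destruct (excluded_middle_informative (c = linv a)) as [E|E]; simpl; auto.
  subst c. now rewrite gmulA, letter_val_linv, gmulgV, gmul1g.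
Qed.

Lemma word_val_pushl u v : word_val (pushl u v) = gmul (word_val u) (word_val v).
Proof. induction u; simpl; [now rewrite gmul1g|]. rewrite word_val_push, IHu. apply gmulA. Qed.

Lemma word_val_invl l : word_val (invl l) = ginv (word_val l).
Proof.
  induction l; simpl; [now rewrite invg1|]. unfold invl in *; simpl.
  rewrite word_val_app, IHl, invgM. simpl. now rewrite gmulg1, letter_val_linv.
Qed.

(* The universal property yields a homomorphism
   g : F -> rword_group sending b x to [x]; word_val is a left inverse of g
   (by uniqueness in the universal property) and a right inverse on
   reduced words (by induction). *)
Lemma free_normal_form :
  (forall y, exists l, reduced l /\ y = word_val l) /\
  (forall l1 l2, reduced l1 -> reduced l2 -> word_val l1 = word_val l2 -> l1 = l2).
Proof.
  destruct (Hb (rword_group X) (fun x => exist _ [(x, true)] (singleton_reduced X x)))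
    as [g [Hg [Hgb _]]].
  destruct (Hb F b) as [g0 [_ [_ Huniq]]].
  assert (val_hom : is_hom (G := rword_group X) (fun u => word_val (proj1_sig u))).
  { intros u v. apply word_val_pushl. }
  assert (val_g : forall y, word_val (proj1_sig (g y)) = y).
  { intro y. rewrite (Huniq (fun y => word_val (proj1_sig (g y)))).
    - symmetry. apply (Huniq (fun y => y)); [intros u v|intro x]; reflexivity.
    - intros u v. rewrite Hg. apply val_hom.
    - intro x. rewrite Hgb. apply gmulg1. }
  assert (g_val : forall l, reduced l -> proj1_sig (g (word_val l)) = l).
  { induction l as [|a l IH]; intro R; simpl.
    - now rewrite (hom_one g Hg).
    - rewrite Hg. simpl. rewrite IH by (eapply reduced_tl; eauto).
      destruct a as [x []]; unfold letter_val; simpl.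
      + rewrite Hgb. simpl. now apply push_reduced_cons.
      + rewrite (hom_inv g Hg), Hgb. simpl. now apply push_reduced_cons. }
  split.
  - intro y. exists (proj1_sig (g y)). split; [apply (proj2_sig (g y))|symmetry; apply val_g].
  - intros l1 l2 R1 R2 E. now rewrite <- (g_val l1 R1), <- (g_val l2 R2), E.
Qed.
End NormalForm.

Definition cyclically_reduced {X : Type} (w : list (@letter X)) : Prop :=
  w <> [] /\ reduced w /\
  (forall x y, nth_error w 0 = Some x -> nth_error w (pred (length w)) = Some y -> x <> linv y).

Section Periodic.
Context {X : Type}.
Variables (w : list (@letter X)) (d0 : @letter X).
Hypothesis Hw : cyclically_reduced w.

Let n := length w.

Lemma length_pos : n <> 0.
Proof. unfold n. destruct Hw as [Hne _]. destruct w; simpl; congruence. Qed.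

Definition wper (i : nat) : letter := nth (i mod n) w d0.
Definition seg (s L : nat) : list letter := map wper (seq s L).

Definition period (d : nat) : Prop := forall i, wper (d + i) = wper i.

Lemma nth_seg s L j : j < L -> nth_error (seg s L) j = Some (wper (s + j)).
Proof.
  intro. unfold seg. rewrite nth_error_map, nth_error_seq.
  destruct (Nat.ltb_spec j L); [reflexivity|lia].
Qed.

Lemma length_seg s L : length (seg s L) = L.
Proof. unfold seg. now rewrite length_map, length_seq. Qed.

Lemma wper_add_mul i k : wper (i + k * n) = wper i.
Proof. unfold wper. now rewrite Nat.Div0.mod_add. Qed.

Lemma period_length : period n.
Proof. intro i. rewrite Nat.add_comm, <- (Nat.mul_1_l n) at 1. apply wper_add_mul. Qed.

Lemma seg_reduced s L : reduced (seg s L).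
Proof.
  destruct Hw as (_ & Rw & Cw).
  intros i a c E1 E2.
  assert (Hi : S i < L) by (rewrite <- (length_seg s L); apply nth_error_Some; congruence).
  rewrite nth_seg in E1, E2 by lia. inversion E1; inversion E2; subst a c. clear E1 E2.
  assert (Hn := length_pos).
  set (j := s + i). replace (s + S i) with (S j) by (unfold j; lia).
  assert (Hm := Nat.mod_upper_bound j n Hn).
  assert (Hd := Nat.div_mod_eq j n).
  unfold wper. destruct (Nat.lt_ge_cases (S (j mod n)) n) as [Hlt|Hge].
  - (* consecutive letters inside one copy of w *)
    assert (Emod : S j mod n = S (j mod n)).
    { replace (S j) with (S (j mod n) + (j / n) * n) by lia.
      rewrite Nat.Div0.mod_add, Nat.mod_small; lia. }
    rewrite Emod. apply (Rw (j mod n)); apply nth_error_nth'; unfold n in *; lia.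
  - (* the last letter of w followed by the first *)
    assert (Emod : S j mod n = 0).
    { replace (S j) with (0 + (S (j / n)) * n) by lia.
      now rewrite Nat.Div0.mod_add, Nat.Div0.mod_0_l. }
    rewrite Emod. replace (j mod n) with (pred n) by lia.
    apply Cw; apply nth_error_nth'; unfold n in *; lia.
Qed.

Lemma seg_app s x y : seg s (x + y) = seg s x ++ seg (s + x) y.
Proof. unfold seg. now rewrite seq_app, map_app. Qed.

Lemma seg_shift d s L : period d -> seg (d + s) L = seg s L.
Proof.
  intro Hd. revert s; induction L as [|L IH]; intro s; simpl; auto.
  unfold seg in *; simpl. rewrite Hd. f_equal. replace (S (d + s)) with (d + S s) by lia. apply IH.
Qed.

Lemma seg_period_app d y : period d -> seg 0 (d + y) = seg 0 d ++ seg 0 y.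
Proof. intro Hd. rewrite seg_app. simpl. rewrite <- (Nat.add_0_r d) at 2. now rewrite seg_shift. Qed.

Lemma seg_length : seg 0 n = w.
Proof.
  apply nth_error_ext. intro j. destruct (Nat.lt_ge_cases j n).
  - rewrite nth_seg by auto. simpl. unfold wper. rewrite Nat.mod_small by auto.
    symmetry. now apply nth_error_nth'.
  - rewrite !(proj2 (nth_error_None _ _)); auto. now rewrite length_seg.
Qed.

Lemma firstn_seg s L L' : L' <= L -> firstn L' (seg s L) = seg s L'.
Proof.
  intro. replace L with (L' + (L - L')) by lia.
  rewrite seg_app, firstn_app, length_seg, Nat.sub_diag. simpl.
  rewrite app_nil_r. apply firstn_all2. now rewrite length_seg.
Qed.

Lemma skipn_seg s L L' : skipn L' (seg s L) = seg (s + L') (L - L').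
Proof. unfold seg. now rewrite skipn_map, skipn_seq. Qed.

Lemma shift_agree a k :
  (forall j, j < n -> wper (a + j) = wper (k + j)) -> forall j, wper (a + j) = wper (k + j).
Proof.
  intros Hwin j. assert (Hn := length_pos).
  assert (Hm := Nat.mod_upper_bound j n Hn). assert (Hd := Nat.div_mod_eq j n).
  replace (a + j) with ((a + j mod n) + (j / n) * n) by lia.
  replace (k + j) with ((k + j mod n) + (j / n) * n) by lia.
  rewrite !wper_add_mul. now apply Hwin.
Qed.
End Periodic.

Definition npow {G : group} (x : G) (N : nat) : G := Nat.iter N (gmul x) gone.

Lemma npow_commute {G : group} (x y : G) N : commute x y -> commute (npow x N) y.
Proof.
  unfold commute. intro E. induction N; simpl; [now rewrite gmul1g, gmulg1|].
  now rewrite <- gmulA, IHN, !gmulA, E.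
Qed.

Lemma firstn_app_length {A} (l1 l2 : list A) : firstn (length l1) (l1 ++ l2) = l1.
Proof. rewrite firstn_app, Nat.sub_diag, firstn_all. apply app_nil_r. Qed.

Lemma skipn_app_length {A} (l1 l2 : list A) : skipn (length l1) (l1 ++ l2) = l2.
Proof. now rewrite skipn_app, Nat.sub_diag, skipn_all. Qed.

Section Centraliser.
Variables (F : group) (X : Type) (b : X -> F).
Hypothesis Hb : free_on b.
Variables (w : list (@letter X)) (d0 : @letter X).
Hypothesis Hw : cyclically_reduced w.

Notation V := (word_val F X b).
Notation seg := (seg w d0).
Notation wper := (wper w d0).

Lemma word_val_power N : V (seg 0 (N * length w)) = npow (V w) N.
Proof.
  induction N; simpl; [reflexivity|].
  now rewrite seg_period_app, word_val_app, IHN, seg_length by (apply period_length; auto).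
Qed.

Lemma word_val_cancel u1 s v1 : gmul (V (u1 ++ s)) (V (invl s ++ v1)) = V (u1 ++ v1).
Proof. rewrite !word_val_app, word_val_invl. gnorm. reflexivity. Qed.

Lemma commuting_cancellation A v : reduced A -> reduced v -> commute (V A) (V v) ->
  exists A1 s v2 v1 s' A2, A = A1 ++ s /\ v = invl s ++ v2 /\
    v = v1 ++ s' /\ A = invl s' ++ A2 /\ A1 ++ v2 = v1 ++ A2.
Proof.
  intros RA Rv HA.
  destruct (cancel_decomposition A v RA Rv) as (A1 & s & v2 & EA & Ev & R1).
  destruct (cancel_decomposition v A Rv RA) as (v1 & s' & A2 & Ev' & EA' & R2).
  exists A1, s, v2, v1, s', A2. repeat split; auto.
  apply (proj2 (free_normal_form F X b Hb)); auto.
  rewrite <- (word_val_cancel A1 s v2), <- (word_val_cancel v1 s' A2), <- EA, <- Ev, <- Ev', <- EA'.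
  exact HA.
Qed.

(* Proof: apply commuting_cancellation to v and the power
   A = w^(|v|+1), a prefix of w^infinity long enough that all cancellation
   happens inside it, and read off the pieces as segments. *)
Lemma centraliser_word_shape v : reduced v -> commute (V w) (V v) ->
  exists a k, v = seg 0 a ++ invl (seg 0 k) /\ forall j, wper (a + j) = wper (k + j).
Proof.
  intros Rv Hc.
  set (m := length v). set (n := length w). set (N := S m).
  assert (Hn : n <> 0) by (apply length_pos; auto).
  set (A := seg 0 (N * n)).
  assert (HA : commute (V A) (V v)) by (unfold A, n; rewrite word_val_power; now apply npow_commute).
  destruct (commuting_cancellation A v) as (A1 & s & v2 & v1 & s' & A2 & EA & Ev & Ev' & EA' & EX);
    auto; [apply seg_reduced; auto|].
  assert (LA : length A = N * n) by apply length_seg.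
  assert (L1 := f_equal (@length _) EA). assert (L2 := f_equal (@length _) Ev).
  assert (L3 := f_equal (@length _) Ev'). assert (L4 := f_equal (@length _) EA').
  assert (L5 := f_equal (@length _) EX).
  rewrite !length_app in L1, L2, L3, L4, L5. rewrite length_invl in L2, L4. fold m in L2, L3.
  set (k := length s) in *.
  rewrite length_app in L5. assert (Hk : length s' = k) by lia.
  assert (HNn : n + m <= N * n) by (unfold N; nia).
  assert (EA1 : A1 = seg 0 (N * n - k)).
  { rewrite <- (firstn_app_length A1 s), <- EA. unfold A. rewrite firstn_seg by lia. f_equal. lia. }
  assert (Es' : invl s' = seg 0 k).
  { rewrite <- (firstn_app_length (invl s') A2), <- EA'. unfold A.
    now rewrite length_invl, Hk, firstn_seg by lia. }
  assert (EA2 : A2 = seg k (N * n - k)).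
  { rewrite <- (skipn_app_length (invl s') A2), <- EA'. unfold A.
    now rewrite length_invl, Hk, skipn_seg. }
  assert (Ev1 : v1 = seg 0 (m - k)).
  { rewrite <- (firstn_app_length v1 A2), <- EX, firstn_app.
    replace (length v1 - length A1) with 0 by lia. rewrite app_nil_r.
    replace (length v1) with (m - k) by lia. rewrite EA1, firstn_seg by lia. reflexivity. }
  assert (Eshift : skipn (m - k) A1 ++ v2 = A2).
  { replace (m - k) with (length v1) by lia. rewrite <- (skipn_app_length v1 A2), <- EX.
    rewrite skipn_app. replace (length v1 - length A1) with 0 by lia. reflexivity. }
  rewrite EA1, skipn_seg, EA2 in Eshift.
  exists (m - k), k. split.
  - rewrite Ev', Ev1, <- Es', invl_invl. reflexivity.
  - apply shift_agree; auto. intros j Hj.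
    assert (E := f_equal (fun l => nth_error l j) Eshift). simpl in E.
    rewrite nth_error_app1 in E by (rewrite length_seg; nia).
    rewrite !nth_seg in E by nia. now inversion E.
Qed.

Lemma centraliser_cyclically_reduced y : commute (V w) y ->
  exists d, period w d0 d /\ (y = V (seg 0 d) \/ y = ginv (V (seg 0 d))).
Proof.
  intro Hy.
  destruct (proj1 (free_normal_form F X b Hb) y) as [v [Rv ->]].
  destruct (centraliser_word_shape v Rv Hy) as (a & k & -> & Hshift).
  set (n := length w). assert (Hn : n <> 0) by (apply length_pos; auto).
  destruct (Nat.le_gt_cases k a) as [Hle|Hgt].
  -
    assert (Pd : period w d0 (a - k)).
    { intro i. rewrite <- (wper_add_mul w d0 i k), <- (wper_add_mul w d0 (a - k + i) k). fold n.
      replace (a - k + i + k * n) with (a + (i + k * n - k)) by nia.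
      rewrite Hshift. f_equal. nia. }
    exists (a - k). split; auto. left.
    replace (seg 0 a) with (seg 0 (a - k) ++ seg 0 k)
      by (rewrite <- seg_period_app by auto; f_equal; lia).
    rewrite !word_val_app, word_val_invl. gnorm. reflexivity.
  -
    assert (Pd : period w d0 (k - a)).
    { intro i. rewrite <- (wper_add_mul w d0 i k), <- (wper_add_mul w d0 (k - a + i) k). fold n.
      replace (k - a + i + k * n) with (k + (i + k * n - a)) by nia.
      rewrite <- Hshift. f_equal. nia. }
    exists (k - a). split; auto. right.
    replace (seg 0 k) with (seg 0 (k - a) ++ seg 0 a)
      by (rewrite <- seg_period_app by auto; f_equal; lia).
    rewrite !word_val_app, word_val_invl, word_val_app. gnorm.
    reflexivity.
Qed.

(* Hence the centraliser of a cyclically reduced word is commutative: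
   prefixes of w^infinity of period lengths commute. *)
Lemma commute_trans_cyclically_reduced y z :
  commute (V w) y -> commute (V w) z -> commute y z.
Proof.
  intros Hy Hz.
  destruct (centraliser_cyclically_reduced y Hy) as [d1 [P1 E1]].
  destruct (centraliser_cyclically_reduced z Hz) as [d2 [P2 E2]].
  assert (C : commute (V (seg 0 d1)) (V (seg 0 d2))).
  { unfold commute. rewrite <- !word_val_app, <- !seg_period_app by auto. now rewrite Nat.add_comm. }
  destruct E1 as [->| ->]; destruct E2 as [->| ->]; auto using commute_inv_l.
  - symmetry. now apply commute_inv_l.
  - apply commute_inv_l. symmetry. apply commute_inv_l. now symmetry.
Qed.
End Centraliser.

(* Every non-empty reduced word is a conjugate s w s^-1 of a cyclically
   reduced word w (strip matching outer letters). *)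
Lemma reduced_conj_cyclically_reduced {X : Type} (l : list (@letter X)) :
  reduced l -> l <> [] -> exists s w, l = s ++ w ++ invl s /\ cyclically_reduced w.
Proof.
  intros Rl0 Hne0.
  enough (Fuel : forall N (l : list letter), length l < N -> reduced l -> l <> [] ->
            exists s w, l = s ++ w ++ invl s /\ cyclically_reduced w)
    by (apply (Fuel (S (length l))); auto).
  clear l Rl0 Hne0. induction N as [|N IH]; intros l' Hl Rl Hne; [lia|].
  destruct (classic (exists x y, nth_error l' 0 = Some x /\
                      nth_error l' (pred (length l')) = Some y /\ x = linv y))
    as [(x & y & E1 & E2 & E3)|Hcyc].
  -
    destruct l' as [|x' l'']; [congruence|]. simpl in E1. inversion E1; subst x'. clear E1.
    destruct l'' as [|c l3].
    { simpl in E2. inversion E2; subst y. exfalso. apply (linv_neq x). auto. }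
    destruct (exists_last (l := c :: l3)) as [m [y' Em]]; [congruence|].
    rewrite Em in *. simpl in E2. rewrite length_app in E2. simpl in E2.
    replace (length m + 1) with (S (length m)) in E2 by lia. simpl in E2.
    rewrite nth_error_app2, Nat.sub_diag in E2 by lia. simpl in E2. inversion E2; subst y'. clear E2.
    assert (Rm : reduced m) by (eapply reduced_app_l, reduced_tl; eauto).
    destruct m as [|c' m'].
    { exfalso. apply (reduced_hd _ _ _ Rl). now rewrite E3, linvK. }
    destruct (IH (c' :: m')) as (s & w & Es & Cw); auto; [simpl in *; rewrite length_app in Hl; simpl in Hl; lia|congruence|].
    exists (x :: s), w. split; auto. rewrite Es. unfold invl at 2. simpl. fold (invl s).
    rewrite E3, linvK. simpl. now rewrite <- !app_assoc.
  - exists [], l'. simpl. split; [unfold invl; simpl; now rewrite app_nil_r|].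
    repeat split; auto. intros x y E1 E2 E3. apply Hcyc. eauto.
Qed.

Lemma free_commute_trans (F : group) (X : Type) (b : X -> F) (Hb : free_on b) (a y z : F) :
  a <> gone -> commute a y -> commute a z -> commute y z.
Proof.
  intros Ha Hy Hz.
  destruct (proj1 (free_normal_form F X b Hb) a) as [l [Rl ->]].
  destruct (reduced_conj_cyclically_reduced l Rl) as (s & w & -> & Cw);
    [intros ->; now apply Ha|].
  set (t := word_val F X b s).
  assert (Et : conjg t (word_val F X b (s ++ w ++ invl s)) = word_val F X b w).
  { unfold conjg, t. rewrite !word_val_app, word_val_invl. gnorm. reflexivity. }
  destruct w as [|d0 w']; [now destruct Cw|].
  apply (conjg_commute t). apply (commute_trans_cyclically_reduced F X b Hb _ d0 Cw);
    rewrite <- Et; now apply conjg_commute.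
Qed.

Lemma hom_commg {G K : group} (f : G -> K) (hf : is_hom f) (x y : G) :
  f (commg x y) = commg (f x) (f y).
Proof. unfold commg. now rewrite !hf, !(hom_inv f hf). Qed.

Lemma hom_kills_derived {G K : group} (f : G -> K) :
  is_hom f -> (forall x y, commute (f x) (f y)) -> forall d, in_derived d -> f d = gone.
Proof.
  intros hf Hab d Hd.
  induction Hd as [|s x [a [c ->]] _ IH|s x [a [c ->]] _ IH].
  - now apply hom_one.
  - now rewrite hf, IH, gmulg1, hom_commg, commg_of_commute.
  - now rewrite hf, IH, gmulg1, (hom_inv f hf), hom_commg, commg_of_commute, invg1.
Qed.

(* The key fact: Z(H) meets [H,H] trivially.  A map to a free group not
   killing z has image centralising the non-trivial element phi z, hence
   commutative, hence kills [H,H]. *)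
Lemma central_derived_trivial (H : group) (hH : residually_free H) (z : H) :
  central z -> in_derived z -> z = gone.
Proof.
  intros Cz Dz. apply NNPP. intro Hz.
  destruct (hH z Hz) as (F & phi & [X [b Hb]] & Hphi & Hpz).
  apply Hpz, (hom_kills_derived phi Hphi); auto.
  intros x y. apply (free_commute_trans F X b Hb (phi z)); auto;
    unfold commute; now rewrite <- !Hphi, Cz.
Qed.

Lemma central_ab_eq_inj (H : group) (hH : residually_free H) (z1 z2 : H) :
  central z1 -> central z2 -> ab_eq z1 z2 -> z1 = z2.
Proof.
  intros C1 C2 Hab.
  assert (E : gmul (ginv z1) z2 = gone).
  { apply central_derived_trivial; auto. apply central_mul; auto. now apply central_inv. }
  apply (mulgI (ginv z1)). now rewrite E, gmulVg.
Qed.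

(* Integer vectors are functions nat -> Z; Z^n is the set of vectors
   supported in [0, n). *)
Definition vec : Type := nat -> Z.
Definition vzero : vec := fun _ => 0%Z.
Definition vadd (u v : vec) : vec := fun i => (u i + v i)%Z.
Definition vneg (u : vec) : vec := fun i => (- u i)%Z.
Definition smul (q : Z) (u : vec) : vec := fun i => (q * u i)%Z.
Definition supported (v : vec) (n : nat) : Prop := forall i, n <= i -> v i = 0%Z.

Definition zsubgroup (V : vec -> Prop) : Prop :=
  V vzero /\ (forall u v, V u -> V v -> V (vadd u v)) /\ (forall v, V v -> V (vneg v)).

Inductive span (L : list vec) : vec -> Prop :=
| span_zero : span L vzero
| span_add g u : In g L -> span L u -> span L (vadd g u)
| span_sub g u : In g L -> span L u -> span L (vadd (vneg g) u).

Lemma span_incl L L' v : incl L L' -> span L v -> span L' v.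
Proof. intros HL S; induction S; [apply span_zero|apply span_add|apply span_sub]; auto. Qed.

Lemma span_smul L g u q : In g L -> span L u -> span L (vadd (smul q g) u).
Proof.
  intros Hg Hu. induction q using Z.peano_ind.
  - replace (vadd (smul 0 g) u) with u; auto.
  - replace (vadd (smul (Z.succ q) g) u) with (vadd g (vadd (smul q g) u)); [now apply span_add|].
    apply functional_extensionality; intro i; unfold vadd, smul; lia.
  - replace (vadd (smul (Z.pred q) g) u) with (vadd (vneg g) (vadd (smul q g) u)); [now apply span_sub|].
    apply functional_extensionality; intro i; unfold vadd, vneg, smul; lia.
Qed.

Lemma zsubgroup_smul V q v : zsubgroup V -> V v -> V (smul q v).
Proof.
  intros (V0 & Vadd & Vneg) Hv. induction q using Z.peano_ind.
  - replace (smul 0 v) with vzero; auto.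
  - replace (smul (Z.succ q) v) with (vadd v (smul q v)); auto.
    apply functional_extensionality; intro i; unfold vadd, smul; lia.
  - replace (smul (Z.pred q) v) with (vadd (vneg v) (smul q v)); auto.
    apply functional_extensionality; intro i; unfold vadd, vneg, smul; lia.
Qed.

(* If some element of V has non-zero i-th coordinate, some vd in V has a
   positive i-th coordinate dividing that of every element of V (take it
   minimal and divide with remainder). *)
Lemma zsubgroup_coordinate_gcd V i : zsubgroup V -> (exists v, V v /\ v i <> 0%Z) ->
  exists vd, V vd /\ (0 < vd i)%Z /\ forall v, V v -> exists q, v i = (q * vd i)%Z.
Proof.
  intros HV [v0 [Hv0 Hn0]]. pose proof HV as (_ & Vadd & Vneg).
  set (Pk := fun k : nat => exists v, V v /\ v i = Z.of_nat (S k)).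
  assert (Hne : exists k, Pk k).
  { destruct (Z_lt_le_dec 0 (v0 i)).
    - exists (Z.to_nat (v0 i - 1)), v0. split; auto. lia.
    - exists (Z.to_nat (- v0 i - 1)), (vneg v0). split; auto. unfold vneg. lia. }
  destruct (dec_inh_nat_subset_has_unique_least_element Pk (fun k => classic (Pk k)) Hne)
    as [k0 [[[vd [Hvd Evd]] Hmin] _]].
  exists vd. split; [auto|split; [lia|]]. intros v Hv.
  exists (v i / vd i)%Z.
  set (u := vadd (smul (- (v i / vd i)) vd) v).
  assert (Hu : V u) by (apply Vadd; auto; now apply zsubgroup_smul).
  assert (Eu : u i = (v i mod vd i)%Z).
  { unfold u, vadd, smul. rewrite (Z.div_mod (v i) (vd i)) at 2 by lia. lia. }
  assert (Hr := Z.mod_pos_bound (v i) (vd i) ltac:(lia)).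
  destruct (Z.eq_dec (v i mod vd i) 0) as [Hr0|Hr0].
  - rewrite (Z.div_mod (v i) (vd i)) at 1 by lia. lia.
  - exfalso. assert (Hk : Pk (Z.to_nat (u i - 1))) by (exists u; split; auto; lia).
    apply Hmin in Hk. lia.
Qed.

(* Induction on n: the elements with vanishing n-th coordinate form a
   subgroup of Z^n, and one more generator handles the last coordinate. *)
Lemma zsubgroup_fin_gen : forall n (V : vec -> Prop), zsubgroup V ->
  (forall v, V v -> supported v n) ->
  exists L, (forall g, In g L -> V g) /\ forall v, V v -> span L v.
Proof.
  induction n as [|n IH]; intros V HV Vs.
  - exists []. split; [intros g []|]. intros v Hv.
    replace v with vzero; [apply span_zero|].
    apply functional_extensionality; intro i. symmetry. apply Vs; auto. lia.
  - destruct (classic (exists v, V v /\ v n <> 0%Z)) as [Hex|Hall].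
    + destruct (zsubgroup_coordinate_gcd V n HV Hex) as (vd & Hvd & Hpos & Hdiv).
      pose proof HV as (V0 & Vadd & Vneg).
      set (V' := fun v => V v /\ v n = 0%Z).
      destruct (IH V') as [L' [HL'1 HL'2]].
      * split; [split; auto|split].
        -- intros u v [Hu Eu] [Hv Ev]. split; auto. unfold vadd. lia.
        -- intros v [Hv Ev]. split; auto. unfold vneg. lia.
      * intros v [Hv Ev] i Hi. destruct (Nat.eq_dec i n); [now subst|]. apply Vs; auto. lia.
      * exists (vd :: L'). split; [intros g [<-|Hg]; auto; now apply HL'1|].
        intros v Hv. destruct (Hdiv v Hv) as [q Hq].
        set (u := vadd (smul (- q) vd) v).
        replace v with (vadd (smul q vd) u)
          by (apply functional_extensionality; intro i; unfold u, vadd, smul; lia).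
        apply span_smul; [now left|]. apply span_incl with L'; [intros ? ?; now right|].
        apply HL'2. split.
        -- apply Vadd; auto. now apply zsubgroup_smul.
        -- unfold u, vadd, smul. lia.
    + apply IH; auto. intros v Hv i Hi. destruct (Nat.eq_dec i n) as [->|].
      * destruct (Z.eq_dec (v n) 0); auto. exfalso; eauto.
      * apply Vs; auto. lia.
Qed.

Section Exponents.
Context {G : group}.

Definition zpow (x : G) (z : Z) : G :=
  match z with
  | Z0 => gone
  | Zpos p => npow x (Pos.to_nat p)
  | Zneg p => ginv (npow x (Pos.to_nat p))
  end.

Lemma npow_S_r (x : G) k : npow x (S k) = gmul (npow x k) x.
Proof. symmetry. apply (npow_commute x x k). reflexivity. Qed.

Lemma zpow_succ (x : G) z : zpow x (Z.succ z) = gmul x (zpow x z).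
Proof.
  destruct z as [|p|p].
  - simpl. now rewrite gmulg1.
  - replace (Z.succ (Z.pos p)) with (Z.pos (Pos.succ p)) by lia. simpl.
    now rewrite Pos2Nat.inj_succ.
  - destruct (Pos.succ_pred_or p) as [->|E].
    + simpl. now rewrite gmulg1, gmulgV.
    + rewrite <- E. replace (Z.succ (Z.neg (Pos.succ (Pos.pred p)))) with (Z.neg (Pos.pred p)) by lia.
      simpl. rewrite Pos2Nat.inj_succ, npow_S_r. gnorm. reflexivity.
Qed.

Lemma zpow_pred (x : G) z : zpow x (Z.pred z) = gmul (ginv x) (zpow x z).
Proof. rewrite <- (Z.succ_pred z) at 2. rewrite zpow_succ. gnorm. reflexivity. Qed.

Lemma zpow_add (x : G) a c : zpow x (a + c) = gmul (zpow x a) (zpow x c).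
Proof.
  induction a using Z.peano_ind.
  - simpl. now rewrite gmul1g.
  - replace (Z.succ a + c)%Z with (Z.succ (a + c)) by lia. now rewrite !zpow_succ, IHa, gmulA.
  - replace (Z.pred a + c)%Z with (Z.pred (a + c)) by lia. now rewrite !zpow_pred, IHa, gmulA.
Qed.

Fixpoint expo_prod (l : list G) (v : vec) : G :=
  match l with
  | [] => gone
  | g :: l' => gmul (zpow g (v 0)) (expo_prod l' (fun i => v (S i)))
  end.

Lemma ab_eq_swap (a b c d : G) : ab_eq (gmul (gmul a b) (gmul c d)) (gmul (gmul a c) (gmul b d)).
Proof.
  apply ab_eq_trans with (gmul a (gmul (gmul b c) d)); [apply ab_eq_of_eq; gnorm; reflexivity|].
  apply ab_eq_trans with (gmul a (gmul (gmul c b) d)); [|apply ab_eq_of_eq; gnorm; reflexivity].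
  apply ab_eq_mul; [apply ab_eq_refl|]. apply ab_eq_mul; [apply ab_eq_comm|apply ab_eq_refl].
Qed.

Lemma expo_prod_add l : forall u v,
  ab_eq (expo_prod l (vadd u v)) (gmul (expo_prod l u) (expo_prod l v)).
Proof.
  induction l as [|g l IH]; intros u v; simpl.
  - apply ab_eq_of_eq. now rewrite gmul1g.
  - unfold vadd at 1. rewrite zpow_add. eapply ab_eq_trans; [|apply ab_eq_swap].
    apply ab_eq_mul; [apply ab_eq_refl|]. apply (IH (fun i => u (S i)) (fun i => v (S i))).
Qed.

Lemma expo_prod_zero l : expo_prod l vzero = gone.
Proof. induction l; simpl; auto. unfold vzero in *. now rewrite IHl, gmul1g. Qed.

Lemma expo_prod_neg l v : ab_eq (expo_prod l (vneg v)) (ginv (expo_prod l v)).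
Proof.
  assert (E := expo_prod_add l v (vneg v)).
  replace (vadd v (vneg v)) with vzero in E
    by (apply functional_extensionality; intro; unfold vadd, vneg, vzero; lia).
  rewrite expo_prod_zero in E.
  apply ab_eq_trans with (gmul (ginv (expo_prod l v)) (gmul (expo_prod l v) (expo_prod l (vneg v))));
    [apply ab_eq_of_eq; gnorm; reflexivity|].
  apply ab_eq_trans with (gmul (ginv (expo_prod l v)) gone); [|apply ab_eq_of_eq, gmulg1].
  apply ab_eq_mul; [apply ab_eq_refl|now apply ab_eq_sym].
Qed.

Definition unit_vec (i : nat) : vec := fun j => if Nat.eqb j i then 1%Z else 0%Z.

Lemma expo_prod_unit l : forall i, i < length l -> expo_prod l (unit_vec i) = nth i l gone.
Proof.
  induction l as [|g l IH]; intros i Hi; simpl in *; [lia|].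
  destruct i as [|i]; simpl.
  - replace (fun j => unit_vec 0 (S j)) with vzero by (apply functional_extensionality; reflexivity).
    now rewrite expo_prod_zero, !gmulg1.
  - replace (fun j => unit_vec (S i) (S j)) with (unit_vec i)
      by (apply functional_extensionality; reflexivity).
    rewrite IH by lia. apply gmul1g.
Qed.

Lemma ab_eq_expo_prod (l : list G) x : in_gen (fun s => In s l) x ->
  exists v, supported v (length l) /\ ab_eq x (expo_prod l v).
Proof.
  intro Hx. induction Hx as [|s x Hs _ [v [Sv Cv]]|s x Hs _ [v [Sv Cv]]].
  - exists vzero. split; [intros i _; reflexivity|]. rewrite expo_prod_zero. apply ab_eq_refl.
  - destruct (In_nth l s gone Hs) as [i [Hi Ei]].
    exists (vadd (unit_vec i) v). split.
    + intros j Hj. unfold vadd, unit_vec. rewrite Sv by lia. destruct (Nat.eqb_spec j i); lia.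
    + apply ab_eq_sym. eapply ab_eq_trans; [apply expo_prod_add|].
      rewrite expo_prod_unit, Ei by auto. apply ab_eq_mul; [apply ab_eq_refl|now apply ab_eq_sym].
  - destruct (In_nth l s gone Hs) as [i [Hi Ei]].
    exists (vadd (vneg (unit_vec i)) v). split.
    + intros j Hj. unfold vadd, vneg, unit_vec. rewrite Sv by lia. destruct (Nat.eqb_spec j i); lia.
    + apply ab_eq_sym. eapply ab_eq_trans; [apply expo_prod_add|].
      apply ab_eq_mul; [|now apply ab_eq_sym].
      eapply ab_eq_trans; [apply expo_prod_neg|]. rewrite expo_prod_unit, Ei by auto. apply ab_eq_refl.
Qed.
End Exponents.

Lemma in_gen_central {G : group} (S : G -> Prop) x :
  (forall s, S s -> central s) -> in_gen S x -> central x.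
Proof.
  intros HS Hx. induction Hx; [apply central_one| |];
    apply central_mul; auto; apply central_inv; auto.
Qed.

Lemma list_choice {A B : Type} (Q : B -> Prop) (R : A -> B -> Prop) (L : list A) :
  (forall a, In a L -> exists b, Q b /\ R a b) ->
  exists bs, (forall b, In b bs -> Q b) /\ forall a, In a L -> exists b, In b bs /\ R a b.
Proof.
  induction L as [|a L IH]; intro Hch.
  - exists []. split; [intros b []|intros a' []].
  - destruct IH as [bs [HQ HR]]; [intros; apply Hch; now right|].
    destruct (Hch a (or_introl eq_refl)) as [b0 [Qb0 Rb0]].
    exists (b0 :: bs). split; [intros b [<-|Hb]; auto|].
    intros a' [<-|Ha']; [exists b0; split; auto; now left|].
    destruct (HR a' Ha') as [b [Hb Rb]]. exists b; split; auto. now right.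
Qed.

Lemma span_lift {G : group} (l : list G) (L : list vec) (zs : list G) :
  (forall g, In g L -> exists z, In z zs /\ ab_eq z (expo_prod l g)) ->
  forall v, span L v -> exists z, in_gen (fun s => In s zs) z /\ ab_eq z (expo_prod l v).
Proof.
  intros Hlift v Hv.
  induction Hv as [|g u Hg _ [z [Hz Ez]]|g u Hg _ [z [Hz Ez]]].
  - exists gone. split; [apply gen_one|]. rewrite expo_prod_zero. apply ab_eq_refl.
  - destruct (Hlift g Hg) as [zg [Hzg Ezg]].
    exists (gmul zg z). split; [now apply gen_mul|].
    eapply ab_eq_trans; [apply ab_eq_mul; eauto|]. apply ab_eq_sym, expo_prod_add.
  - destruct (Hlift g Hg) as [zg [Hzg Ezg]].
    exists (gmul (ginv zg) z). split; [now apply gen_mulV|].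
    eapply ab_eq_trans; [|apply ab_eq_sym, expo_prod_add].
    apply ab_eq_mul; auto. eapply ab_eq_trans; [apply ab_eq_inv; eauto|].
    apply ab_eq_sym, expo_prod_neg.
Qed.

(* The exponent vectors of central elements
   form a subgroup of Z^|l|; lift a finite generating set to central
   elements zs.  Any central z is congruent mod [H,H] to an element of the
   (central) subgroup generated by zs, hence equal to it. *)
Lemma center_fin_gen_of_residually_free (H : group) (hH : residually_free H) :
  fin_gen H -> center_fin_gen H.
Proof.
  intros [l Hl].
  set (CE := fun v => supported v (length l) /\ exists z, central z /\ ab_eq z (expo_prod l v)).
  assert (HCE : zsubgroup CE).
  { split; [|split].
    - split; [intros i _; reflexivity|]. exists gone. split; [apply central_one|].
      rewrite expo_prod_zero. apply ab_eq_refl.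
    - intros u v [Su [zu [Cu Eu]]] [Sv [zv [Cv Ev]]]. split.
      + intros i Hi. unfold vadd. now rewrite Su, Sv.
      + exists (gmul zu zv). split; [now apply central_mul|].
        eapply ab_eq_trans; [apply ab_eq_mul; eauto|]. apply ab_eq_sym, expo_prod_add.
    - intros v [Sv [z [Cz Ez]]]. split.
      + intros i Hi. unfold vneg. now rewrite Sv.
      + exists (ginv z). split; [now apply central_inv|].
        eapply ab_eq_trans; [apply ab_eq_inv; eauto|]. apply ab_eq_sym, expo_prod_neg. }
  destruct (zsubgroup_fin_gen (length l) CE HCE (fun v Hv => proj1 Hv)) as [L [HL Hspan]].
  destruct (list_choice central (fun g z => ab_eq z (expo_prod l g)) L) as [zs [Hzs Hlift]].
  { intros g Hg. apply (HL g Hg). }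
  exists zs. split; auto. intros z Cz.
  destruct (ab_eq_expo_prod l z (Hl z)) as [v [Sv Ev]].
  destruct (span_lift l L zs Hlift v) as [z' [Hz' Ez']]; [apply Hspan; split; eauto|].
  replace z with z'; auto.
  apply central_ab_eq_inj; auto; [now apply (in_gen_central (fun s => In s zs))|].
  eapply ab_eq_trans; [exact Ez'|]. now apply ab_eq_sym.
Qed.

Theorem mainTheorem8 (H : group) (hH : residually_free H) :
  (forall z1 z2 : H, central z1 -> central z2 -> ab_eq z1 z2 -> z1 = z2) /\
  (fin_gen H -> center_fin_gen H).
Proof.
  split.
  - exact (central_ab_eq_inj H hH).
  - exact (center_fin_gen_of_residually_free H hH).
Qed.
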